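(* Let $q,n,d$ be positive integers with $q\ge2$ and $qd=(q-1)n$. Then for every code $C\subseteq[q]^n$ with $|C|=qn-1$ and minimum Hamming distance at least $d$, there exists $u\in[q]^n\setminus C$ such that $C\cup\{u\}$ has minimum Hamming distance at least $d$.
   Context: $[q]=\{0,\dots,q-1\}$; the Hamming distance of two words is the number of coordinates in which they differ; the minimum distance of a code is the minimum Hamming distance between distinct codewords. *)

From mathcomp Require Import all_boot.
Set Implicit Arguments. Unset Strict Implicit. Unset Printing Implicit Defensive.

Definition word (q n : nat) := {ffun 'I_n -> 'I_q}.

Definition hamming (q n : nat) (x y : word q n) : nat :=
  #|[set i : 'I_n | x i != y i]|.

Definition min_dist_ge (q n : nat) (C : {set word q n}) (d : nat) : Prop :=
  forall x y, x \in C -> y \in C -> x != y -> d <= hamming x y.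

(* Put t := n - d, so that q * t = n, and let agree x y = n - hamming x y be the
   number of coordinates in which x and y coincide; distinct codewords agree in <= t places.
   1. Double counting: for a set E of words, the sum of agree y z over y, z in E equals
      the sum over coordinates j and symbols c of colcount E j c ^ 2, where colcount E j c
      is the number of words of E having symbol c at coordinate j.
   2. Plotkin-type bound: if E is a subset of C, this sum is <= |E| (n + (|E| - 1) t).
   3. For a class K i a = {x in C | x i = a}, step 2 and Cauchy-Schwarz on every column
      give |K i a| <= n.  Since the classes of coordinate i partition C, of size qn - 1,
      exactly one symbol b i has a class of size n - 1, all the others have size n.
   4. A full class attains equality in step 2, hence is balanced: every symbol occurs
      exactly t times at every other coordinate.  Subtracting from the column counts of C
      gives the column counts t - [c = b j] of the deficient class K i (b i).
   5. For u := (b j)_j an averaging argument over the deficient classes shows that every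
      codeword agrees with u in at most t places, so u can be added to C. *)
From mathcomp Require Import all_boot all_order all_algebra zify ring.
Set Implicit Arguments. Unset Strict Implicit. Unset Printing Implicit Defensive.
Import Order.TTheory GRing.Theory Num.Theory.

Lemma sum_sq_dev q (f : 'I_q -> nat) (a b : int) :
  (\sum_(c < q) (a * (f c)%:R - b) ^+ 2 = a ^+ 2 * (\sum_(c < q) f c ^ 2)%:R
    - 2 * a * b * (\sum_(c < q) f c)%:R + q%:R * b ^+ 2 :> int)%R.
Proof.
rewrite !natr_sum mulr_sumr mulr_sumr -sumrB.
have -> : (q%:R * b ^+ 2 = \sum_(c < q) b ^+ 2 :> int)%R.
  by rewrite sumr_const card_ord mulr_natl.
rewrite -big_split /=; apply: eq_bigr => c _; rewrite natrX; ring.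
Qed.

Lemma cauchy_schwarz_nat q (f : 'I_q -> nat) : 0 < q ->
  (\sum_(c < q) f c) ^ 2 <= q * \sum_(c < q) f c ^ 2.
Proof.
move=> q0.
have := @sum_sq_dev q f (q%:R)%R ((\sum_(c < q) f c)%:R)%R.
set S := \sum_(c < q) f c ^ 2; set k := \sum_(c < q) f c => E.
have : (0 <= \sum_(c < q) (q%:R * (f c)%:R - k%:R) ^+ 2 :> int)%R.
  by apply: sumr_ge0 => c _; exact: sqr_ge0.
rewrite E; nia.
Qed.

Lemma sum_sq_balanced q (f : 'I_q -> nat) t : \sum_c f c = q * t ->
  (q * t * t <= \sum_c f c ^ 2) /\ (\sum_c f c ^ 2 <= q * t * t -> forall c, f c = t).
Proof.
move=> hs; have E := @sum_sq_dev q f 1%R (t%:R)%R.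
rewrite hs expr1n mul1r mulr1 in E.
have P : (0 <= \sum_(c < q) (1 * (f c)%:R - t%:R) ^+ 2 :> int)%R.
  by apply: sumr_ge0 => c _; exact: sqr_ge0.
split.
  by move: P; rewrite E expr2 ?natz; set S := \sum_(c < q) f c ^ 2; nia.
move=> hle.
have Z : (\sum_(c < q) (1 * (f c)%:R - t%:R) ^+ 2 = 0 :> int)%R.
  apply/eqP; rewrite eq_le P andbT E expr2 ?natz.
  by move: hle; set S := \sum_(c < q) f c ^ 2; nia.
move=> c; have := psumr_eq0P (fun c _ => sqr_ge0 (1 * (f c)%:R - t%:R)%R) Z (i := c) isT.
by move/eqP; rewrite sqrf_eq0 mul1r subr_eq0 => /eqP; lia.
Qed.

Lemma sum_tight_ge (I : finType) (A : {set I}) (F : I -> nat) m :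
  (forall i, i \in A -> m <= F i) -> \sum_(i in A) F i <= #|A| * m ->
  forall i, i \in A -> F i = m.
Proof.
move=> hF hs.
have E : \sum_(i in A) F i = \sum_(i in A) (F i - m) + #|A| * m.
  by rewrite -sum_nat_const -big_split /=; apply: eq_bigr => i /hF; lia.
have : \sum_(i in A) (F i - m) == 0 by lia.
by rewrite sum_nat_eq0 => /forall_inP H i iA; have := H i iA; have := hF i iA; lia.
Qed.

Lemma sum_tight_le (I : finType) (A : {set I}) (F : I -> nat) m :
  (forall i, i \in A -> F i <= m) -> #|A| * m <= \sum_(i in A) F i ->
  forall i, i \in A -> F i = m.
Proof.
move=> hF hs.
have E : #|A| * m = \sum_(i in A) (m - F i) + \sum_(i in A) F i.
  by rewrite -sum_nat_const -big_split /=; apply: eq_bigr => i /hF; lia.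
have : \sum_(i in A) (m - F i) == 0 by lia.
by rewrite sum_nat_eq0 => /forall_inP H i iA; have := H i iA; have := hF i iA; lia.
Qed.

Lemma card_pred_sum (T : finType) (P : pred T) : #|[set x | P x]| = \sum_x (P x : nat).
Proof. by rewrite -sum1_card big_mkcond /=; apply: eq_bigr => x _; rewrite inE; case: (P x). Qed.

Lemma card_in_sum (T : finType) (K : {set T}) (P : pred T) :
  #|[set x in K | P x]| = \sum_(x in K) (P x : nat).
Proof.
rewrite -sum1_card big_mkcond [RHS]big_mkcond /=; apply: eq_bigr => x _.
by rewrite inE; case: (x \in K); case: (P x).
Qed.

Lemma sum_neq_const (T : finType) (i : T) c : \sum_(j | j != i) c = #|T|.-1 * c.
Proof. by rewrite -(cardC1 i) -sum_nat_const; apply: eq_bigl => j; rewrite inE. Qed.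

Lemma sum_neq_set (T : finType) (i : T) (F : T -> nat) :
  \sum_(j | j != i) F j = \sum_(j in [set~ i]) F j.
Proof. by apply: eq_bigl => j; rewrite in_setC1. Qed.

Section Words.
Variables q n : nat.
Implicit Types (x y z : word q n) (E : {set word q n}).

Definition agree x y := #|[set j : 'I_n | x j == y j]|.

Definition colcount E (j : 'I_n) (c : 'I_q) := #|[set x in E | x j == c]|.

Lemma hamming_agree x y : hamming x y + agree x y = n.
Proof.
rewrite /agree; have -> : [set j : 'I_n | x j == y j] = ~: [set j | x j != y j].
  by apply/setP => j; rewrite !inE negbK.
by rewrite /hamming cardsC card_ord.
Qed.

Lemma hamming_sym x y : hamming x y = hamming y x.
Proof. by apply: eq_card => j; rewrite !inE eq_sym. Qed.

Lemma agree_sym x y : agree x y = agree y x.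
Proof. by apply: eq_card => j; rewrite !inE eq_sym. Qed.

Lemma agree_refl x : agree x x = n.
Proof.
by rewrite /agree (_ : [set j | x j == x j] = setT) ?cardsT ?card_ord //; apply/setP=> j; rewrite !inE eqxx.
Qed.

Lemma sum_colcount E j : \sum_c colcount E j c = #|E|.
Proof.
under eq_bigr do rewrite /colcount card_in_sum.
rewrite exchange_big /= -sum1_card; apply: eq_bigr => x _.
by rewrite (bigD1 (x j)) //= eqxx big1 // => c /negbTE; rewrite eq_sym => ->.
Qed.

Lemma sum_agree_row E y : \sum_(z in E) agree y z = \sum_j colcount E j (y j).
Proof.
rewrite /agree; under eq_bigr do rewrite card_pred_sum.
rewrite exchange_big /=; apply: eq_bigr => j _; rewrite /colcount card_in_sum.
by apply: eq_bigr => z _; rewrite eq_sym.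
Qed.

Lemma sum_colcount_sq E j : \sum_(y in E) colcount E j (y j) = \sum_c colcount E j c ^ 2.
Proof.
have E1 y : colcount E j (y j) = \sum_c ((y j == c) * colcount E j c).
  rewrite (bigD1 (y j)) //= eqxx mul1n big1 ?addn0 // => c.
  by rewrite eq_sym => /negbTE ->.
under eq_bigr do rewrite E1.
rewrite exchange_big /=; apply: eq_bigr => c _.
by rewrite -big_distrl /= -card_in_sum mulnn.
Qed.

Lemma sum_agree_pairs E :
  \sum_(y in E) \sum_(z in E) agree y z = \sum_j \sum_c colcount E j c ^ 2.
Proof.
under eq_bigr do rewrite sum_agree_row.
by rewrite exchange_big /=; apply: eq_bigr => j _; exact: sum_colcount_sq.
Qed.

End Words.

Section Plotkin.
Variables (q n t : nat) (C : {set word q n}).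
Hypothesis agree_le : forall y z, y \in C -> z \in C -> y != z -> agree y z <= t.

Lemma sum_agree_le (E : {set word q n}) y : E \subset C -> y \in E ->
  \sum_(z in E) agree y z <= n + (#|E| - 1) * t.
Proof.
move=> sEC yE; rewrite (bigD1 y) //= agree_refl leq_add2l.
apply: leq_trans (_ : \sum_(z in E :\ y) t <= _).
  rewrite [X in _ <= X](eq_bigl (fun z => (z \in E) && (z != y))); last first.
    by move=> z; rewrite !inE andbC.
  apply: leq_sum => z /andP [zE zy].
  by apply: agree_le; rewrite ?(subsetP sEC) // eq_sym.
by rewrite sum_nat_const (cardsD1 y E) yE /= add1n subn1.
Qed.

Lemma sum_colcount_sq_le (E : {set word q n}) : E \subset C ->
  \sum_j \sum_c colcount E j c ^ 2 <= #|E| * (n + (#|E| - 1) * t).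
Proof.
move=> sEC; rewrite -sum_agree_pairs -sum_nat_const.
by apply: leq_sum => y yE; exact: sum_agree_le.
Qed.

End Plotkin.

Section Extension.
Variables q n d : nat.
Hypotheses (q2 : 2 <= q) (n0 : 0 < n) (d0 : 0 < d) (hqd : q * d = (q - 1) * n).
Variable C : {set word q n}.
Hypotheses (hC : #|C| = q * n - 1) (hmin : min_dist_ge C d).

Let t := n - d.

Lemma d_le_n : d <= n. Proof. nia. Qed.
Lemma qt_n : q * t = n. Proof. have := d_le_n; rewrite /t; nia. Qed.
Lemma t_gt0 : 0 < t. Proof. have := qt_n; nia. Qed.
Lemma t_lt_n : t < n. Proof. have := d_le_n; rewrite /t; lia. Qed.

Lemma agree_le_t y z : y \in C -> z \in C -> y != z -> agree y z <= t.
Proof. move=> yC zC yz; have := hmin yC zC yz; have := hamming_agree y z; rewrite /t; lia. Qed.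

Definition K i a := [set x in C | x i == a].

Lemma K_sub i a : K i a \subset C.
Proof. by apply/subsetP => x; rewrite inE => /andP []. Qed.

(* Inside K i a, coordinate i is constant. *)
Lemma colcount_K i a : \sum_c colcount (K i a) i c ^ 2 = #|K i a| ^ 2.
Proof.
rewrite (bigD1 a) //= big1 ?addn0.
  rewrite /colcount; congr (_ ^ 2); apply: eq_card => x; rewrite !inE.
  by case: (x i == a); rewrite ?andbT ?andbF.
move=> c ca; rewrite /colcount (_ : [set x in K i a | x i == c] = set0) ?cards0 //.
apply/setP => x; rewrite !inE.
by apply/negbTE/negP => /andP [/andP [_ /eqP ->]]; rewrite eq_sym (negbTE ca).
Qed.

Lemma card_K_le i a : #|K i a| <= n.
Proof.
set k := #|K i a|.
have Q := sum_colcount_sq_le agree_le_t (K_sub i a).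
have col_cs j : k ^ 2 <= q * \sum_c colcount (K i a) j c ^ 2.
  by rewrite /k -(sum_colcount (K i a) j); apply: cauchy_schwarz_nat; lia.
have lower : q * k ^ 2 + (n - 1) * k ^ 2 <= q * \sum_j \sum_c colcount (K i a) j c ^ 2.
  rewrite (bigD1 i) //= colcount_K mulnDr leq_add2l big_distrr /=.
  apply: leq_trans (_ : \sum_(j | j != i) k ^ 2 <= _).
    by rewrite sum_neq_const card_ord subn1.
  exact: leq_sum.
have [->|kp] := posnP k; first done.
have H : k * (q * k + (n - 1) * k) <= k * (q * (n + (k - 1) * t)).
  have := leq_trans lower (leq_mul (leqnn q) Q).
  rewrite !expnS expn0 !muln1; set m := n - 1; set r := n + (k - 1) * t.
  by rewrite mulnDr !mulnA -/k (mulnC k q) (mulnC k m).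
rewrite leq_pmul2l // mulnDr mulnCA qt_n mulnBl mul1n in H.
have : (q - 1) * k <= (q - 1) * n.
  have : k <= n * k by rewrite leq_pmull.
  have : n <= k * n by rewrite leq_pmull.
  by rewrite !mulnBl !mul1n; move: H; rewrite (mulnC k n); lia.
by rewrite leq_pmul2l; lia.
Qed.

Lemma sum_card_K i : \sum_a #|K i a| = q * n - 1.
Proof. by rewrite -hC -(sum_colcount C i). Qed.

Definition deficient (b : 'I_n -> 'I_q) :=
  forall i, #|K i (b i)| = n - 1 /\ forall a, a != b i -> #|K i a| = n.

Lemma class_sizes i : exists b, #|K i b| = n - 1 /\ forall a, a != b -> #|K i a| = n.
Proof.
have n_le_qn : n <= q * n by rewrite leq_pmull; lia.
have cardA (b : 'I_q) : #|[set~ b]| = q - 1 by rewrite cardsC1 card_ord subn1.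
have [/existsP [b small] | /existsPn all_full] := boolP [exists b, #|K i b| < n]; last first.
  move: (sum_card_K i); rewrite (eq_bigr (fun _ => n)) ?sum_nat_const ?card_ord; first lia.
  by move=> a _; apply/eqP; rewrite eqn_leq card_K_le /= leqNgt.
have S := sum_card_K i; rewrite (bigD1 b) //= sum_neq_set in S.
have full : forall a, a \in [set~ b] -> #|K i a| = n.
  apply: sum_tight_le => [a _|]; first exact: card_K_le.
  rewrite cardA mulnBl mul1n; set s := (X in _ <= X).
  by have S' : #|K i b| + s = q * n - 1 := S; move: small; lia.
exists b; split; last by move=> a ab; apply: full; rewrite in_setC1.
move: S; rewrite (eq_bigr (fun _ => n)) // sum_nat_const cardA mulnBl mul1n => S.
by have S' : #|K i b| + (q * n - n) = q * n - 1 := S; lia.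
Qed.

Lemma deficient_exists : exists b, deficient b.
Proof. exact: fin_all_exists class_sizes. Qed.

Lemma full_class_balanced i a : #|K i a| = n ->
  forall j, j != i -> forall c, colcount (K i a) j c = t.
Proof.
move=> hE j ji.
have Q := sum_colcount_sq_le agree_le_t (K_sub i a).
rewrite (bigD1 i) //= colcount_K hE sum_neq_set in Q.
have colsum j' : \sum_c colcount (K i a) j' c = q * t by rewrite sum_colcount hE qt_n.
have sq : forall j', j' \in [set~ i] -> \sum_c colcount (K i a) j' c ^ 2 = q * t * t.
  apply: sum_tight_ge => [j' _|]; first exact: (sum_sq_balanced (colsum j')).1.
  rewrite cardsC1 card_ord qt_n; set X := (X in X <= _).
  have Q' : n ^ 2 + X <= n * (n + (n - 1) * t) := Q.
  by rewrite mulnDr (mulnCA n.-1) -subn1 (expnS n) expn1 in Q' *; lia.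
by apply: (sum_sq_balanced (colsum j)).2; rewrite sq // in_setC1.
Qed.

Lemma deficient_colcount b : deficient b ->
  forall i j, j != i -> forall c, colcount (K i (b i)) j c = t - (c == b j).
Proof.
move=> hb i j ji c.
have P : \sum_a colcount (K i a) j c = #|K j c|.
  rewrite -(sum_colcount (K j c) i); apply: eq_bigr => a _; apply: eq_card => x.
  by rewrite !inE; case: (x \in C); case: (x j == c); case: (x i == a).
rewrite (bigD1 (b i)) //= (eq_bigr (fun _ => t)) in P; last first.
  by move=> a ab; apply: (full_class_balanced ((hb i).2 a ab) ji c).
rewrite sum_neq_const card_ord -subn1 mulnBl mul1n qt_n in P.
have := t_gt0; have := t_lt_n; move: P.
by case: (eqVneq c (b j)) => [->|cb]; [rewrite (hb j).1 | rewrite ((hb j).2 c cb)]; lia.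
Qed.

Definition deficient_word (b : 'I_n -> 'I_q) : word q n := [ffun j => b j].

Section Deficient.
Variable b : 'I_n -> 'I_q.
Hypothesis hb : deficient b.

Let u := deficient_word b.

Lemma agree_u z : agree z u = \sum_j (z j == b j).
Proof. by rewrite /agree card_pred_sum; apply: eq_bigr => j _; rewrite ffunE. Qed.

Lemma colcount_K_self i : colcount (K i (b i)) i (b i) = #|K i (b i)|.
Proof. by apply: eq_card => x; rewrite !inE -andbA andbb. Qed.

(* Step 5a: the Plotkin bound inside K i (b i) forces each member to agree with u
   in at least t places ... *)
Lemma agree_u_ge i z : z \in K i (b i) -> t <= agree z u.
Proof.
move=> zE; have S := sum_agree_le agree_le_t (K_sub i (b i)) zE.
set E := K i (b i) in zE S *.
have zi : z i = b i by move: zE; rewrite inE => /andP [_ /eqP].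
have hE : #|E| = n - 1 := (hb i).1.
have key : \sum_(y in E) agree z y + agree z u = n + (n - 1) * t.
  rewrite sum_agree_row agree_u -big_split /= (bigD1 i) //= zi colcount_K_self hE eqxx.
  rewrite (eq_bigr (fun _ => t)); last first.
    move=> j ji; rewrite (deficient_colcount hb ji) subnK //.
    exact: leq_trans (leq_b1 _) t_gt0.
  by rewrite sum_neq_const card_ord; lia.
have e : (n - 1) * t = (n - 1 - 1) * t + t by rewrite -mulSnr; congr (_ * _); nia.
by move: S key; rewrite hE e; lia.
Qed.

(* ... while on average they agree with u in at most t places. *)
Lemma sum_agree_u_le i : \sum_(z in K i (b i)) agree z u <= #|K i (b i)| * t.
Proof.
under eq_bigr do rewrite agree_sym.
rewrite sum_agree_row (bigD1 i) //= ffunE colcount_K_self.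
rewrite (eq_bigr (fun _ => t - 1)); last first.
  by move=> j ji; rewrite ffunE (deficient_colcount hb ji) eqxx.
rewrite sum_neq_const card_ord (hb i).1 mulnBr muln1.
have : n - 1 <= (n - 1) * t by rewrite leq_pmulr // t_gt0.
lia.
Qed.

Lemma agree_u_le y : y \in C -> agree y u <= t.
Proof.
move=> yC; case: (pickP [pred i | y i == b i]) => [i /= yi | none]; last first.
  by rewrite agree_u big1 // => j _; have := none j; rewrite /= => ->.
have yE : y \in K i (b i) by rewrite inE yC yi.
by rewrite (sum_tight_ge (@agree_u_ge i) (sum_agree_u_le i) yE).
Qed.

Lemma hamming_u_ge y : y \in C -> d <= hamming y u.
Proof.
move=> /agree_u_le; have := hamming_agree y u; have := d_le_n; rewrite /t; lia.
Qed.

Lemma u_notin : u \notin C.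
Proof. by apply/negP => /agree_u_le; rewrite agree_refl; have := t_lt_n; lia. Qed.

End Deficient.
End Extension.

Theorem proposition5p14 (q n d : nat) :
  0 < q -> 0 < n -> 0 < d -> 2 <= q -> q * d = (q - 1) * n ->
  forall C : {set word q n},
    #|C| = q * n - 1 -> min_dist_ge C d ->
    exists u : word q n, u \notin C /\ min_dist_ge (u |: C) d.
Proof.
move=> _ n0 d0 q2 hqd C hC hmin.
have [b hb] := deficient_exists q2 n0 d0 hqd hC hmin.
exists (deficient_word b); split; first exact: (u_notin q2 n0 d0 hqd hC hmin hb).
have far := hamming_u_ge q2 n0 d0 hqd hC hmin hb.
move=> x y; rewrite !in_setU1 => /orP [/eqP -> | xC] /orP [/eqP -> | yC] xy.
- by rewrite eqxx in xy.
- by rewrite hamming_sym; exact: far.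
- exact: far.
- exact: hmin.
Qed.
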